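(* Let $k,q\ge0$, $p=k+q$, $m=2^p$, $n=2^q$, and $U=\frac{1}{\sqrt{2^p}}H(2^p)$. Fix an integer $c$ with $0\le c\le 2^k-1$ and the input state $\vec s=(1+nc,2+nc,\dots,n+nc)$ of $n$ identical particles. For an output state $\vec t=(t_1,\dots,t_n)$, define $t'_i=((t_i-1)\bmod n)+1$ and let $\vec t'$ be the nondecreasing rearrangement of $(t'_1,\dots,t'_n)$. Then $\vec t$ is suppressed for $U$ with input $\vec s$ if and only if $\vec t'$ is suppressed for $U'=\frac{1}{\sqrt{2^q}}H(2^q)$ with input $(1,2,\dots,n)$ (one particle per mode). This holds both when the particles are bosons and when they are fermions.
   Context: For $m=2^p$, the Sylvester matrix $H(m)$ is defined recursively by $H(1)=[1]$ and $H(2^p)=\begin{bmatrix}H(2^{p-1})&H(2^{p-1})\\ H(2^{p-1})&-H(2^{p-1})\end{bmatrix}$, rows and columns indexed $1,\dots,m$. An $n$-particle state on $m$ modes is a nondecreasing tuple $\vec t=(t_1\le\dots\le t_n)$ with $t_i\in\{1,\dots,m\}$; $\mu_k(\vec t)=|\{i:t_i=k\}|$. For input $\vec s$ and output $\vec t$ under unitary $U$, the scattering matrix is $S_{i,j}=U_{t_i,s_j}$; the bosonic amplitude is $\mathrm{perm}\,S/\sqrt{\prod_k\mu_k(\vec s)!\prod_k\mu_k(\vec t)!}$ and the fermionic amplitude is $\det S/\sqrt{\prod_k\mu_k(\vec s)!\prod_k\mu_k(\vec t)!}$. An output state is suppressed if its amplitude is zero. *)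

From HB Require Import structures.
From mathcomp Require Import all_boot all_order all_algebra all_fingroup all_field.
Set Implicit Arguments. Unset Strict Implicit. Unset Printing Implicit Defensive.
Import Order.TTheory GRing.Theory Num.Theory.
Local Open Scope ring_scope.

(* Sylvester matrix H(2^p), 0-indexed entries (i, j in 0 .. 2^p - 1),
   following the recursive block definition
   H(2^(p+1)) = [[H, H], [H, -H]]. *)
Fixpoint sylv (p : nat) (i j : nat) : int :=
  match p with
  | 0 => 1
  | p'.+1 =>
    let h := (2 ^ p')%N in
    if (i < h)%N then
      (if (j < h)%N then sylv p' i j else sylv p' i (j - h))
    else
      (if (j < h)%N then sylv p' (i - h) j else - sylv p' (i - h) (j - h))
  end.

Definition sylvester (p : nat) : 'M[algC]_(2 ^ p) :=
  \matrix_(i, j) (sylv p i j)%:~R.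

(* Entries of U = H(2^p) / sqrt(2^p), with 1-indexed rows/columns a, b. *)
Definition Uhad (p : nat) (a b : nat) : algC :=
  (sqrtC ((2 ^ p)%:R))^-1 * (sylv p a.-1 b.-1)%:~R.

(* An n-particle state on m modes: nondecreasing list of length n
   with entries in {1, ..., m}. *)
Definition is_state (m n : nat) (t : seq nat) : bool :=
  [&& size t == n, sorted leq t & all (fun x => (1 <= x <= m)%N) t].

Definition mu (t : seq nat) (k : nat) : nat := count_mem k t.

Definition scat (U : nat -> nat -> algC) (n : nat) (s t : seq nat) : 'M[algC]_n :=
  \matrix_(i < n, j < n) U (nth 0%N t i) (nth 0%N s j).

Definition permanent (n : nat) (A : 'M[algC]_n) : algC :=
  \sum_(sg : 'S_n) \prod_(i < n) A i (sg i).

Definition norm_fact (m : nat) (s t : seq nat) : algC :=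
  sqrtC (((\prod_(1 <= k < m.+1) (mu s k)`!) * (\prod_(1 <= k < m.+1) (mu t k)`!))%N%:R).

Definition boson_amp (U : nat -> nat -> algC) (m n : nat) (s t : seq nat) : algC :=
  permanent (scat U n s t) / norm_fact m s t.

Definition fermion_amp (U : nat -> nat -> algC) (m n : nat) (s t : seq nat) : algC :=
  \det (scat U n s t) / norm_fact m s t.

Definition boson_suppressed U m n s t : Prop := boson_amp U m n s t = 0.
Definition fermion_suppressed U m n s t : Prop := fermion_amp U m n s t = 0.

Definition reduce_state (n : nat) (t : seq nat) : seq nat :=
  sort leq [seq ((x.-1 %% n).+1)%N | x <- t].

From HB Require Import structures.
From mathcomp Require Import all_boot all_order all_algebra all_fingroup all_field.
From mathcomp Require Import zify ring.
Set Implicit Arguments. Unset Strict Implicit. Unset Printing Implicit Defensive.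
Import Order.TTheory GRing.Theory Num.Theory.
Local Open Scope ring_scope.

(* H(2^(k+q)) is the Kronecker product H(2^k) (x) H(2^q): its entry at
   (a, n c + j), with n = 2^q and j < n, is H(2^k)[a / n, c] * H(2^q)[a mod n, j].
   Since every input mode lies in block column c, row i of the scattering matrix
   for (s, t) is the row of U' at mode t_i mod n scaled by +-sqrt(2^q / 2^p);
   these are the rows of the scattering matrix for (1..n, t') permuted by the
   sorting permutation.  Scaling and permuting rows multiplies permanent and
   determinant by a nonzero factor, and the normalizations never vanish. *)


Lemma sylv_neq0 p i j : sylv p i j != 0.
Proof.
elim: p i j => [|p IH] i j //=.
by case: ifP => _; case: ifP => _; rewrite ?oppr_eq0 IH.
Qed.

Lemma sylvS p i j : (i < 2 ^ p.+1)%N -> (j < 2 ^ p.+1)%N ->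
  sylv p.+1 i j = sylv 1 (i %/ 2 ^ p) (j %/ 2 ^ p) * sylv p (i %% 2 ^ p) (j %% 2 ^ p).
Proof.
have h_gt0 : (0 < 2 ^ p)%N by rewrite expn_gt0.
have split_index x : (x < 2 ^ p.+1)%N ->
    if (x < 2 ^ p)%N then (x %/ 2 ^ p = 0 /\ x %% 2 ^ p = x)%N
    else (x %/ 2 ^ p = 1 /\ x %% 2 ^ p = x - 2 ^ p)%N.
  rewrite expnS => hx; case: ifP => hxp; first by rewrite divn_small ?modn_small.
  have -> : x = (1 * 2 ^ p + (x - 2 ^ p))%N by lia.
  by rewrite divnMDl // modnMDl divn_small ?modn_small; lia.
move=> /split_index hi /split_index hj /=.
by case: ifP hi => _ [-> ->]; case: ifP hj => _ [-> ->]; rewrite /= ?mul1r ?mulN1r.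
Qed.

Lemma sylv_kron k q a b : (a < 2 ^ (k + q))%N -> (b < 2 ^ (k + q))%N ->
  sylv (k + q) a b =
  sylv k (a %/ 2 ^ q) (b %/ 2 ^ q) * sylv q (a %% 2 ^ q) (b %% 2 ^ q).
Proof.
have q_gt0 : (0 < 2 ^ q)%N by rewrite expn_gt0.
elim: k a b => [|k IH] a b.
  by rewrite add0n => ha hb; rewrite !divn_small // !modn_small // mul1r.
rewrite addSn => ha hb; rewrite sylvS // IH ?ltn_pmod ?expn_gt0 // mulrA.
have hdiv x : (x < 2 ^ (k + q).+1)%N -> (x %/ 2 ^ q < 2 ^ k.+1)%N.
  by rewrite ltn_divLR // -expnD -addSn.
rewrite [sylv k.+1 _ _]sylvS ?hdiv // -!divnMA -!expnD addnC.
rewrite !modn_divl -!expnD [(q + k)%N]addnC.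
by rewrite !(modn_dvdm _ (dvdn_exp2l 2 (leq_addl k q))).
Qed.

Lemma sqrt_pow2_neq0 p : sqrtC ((2 ^ p)%N%:R : algC) != 0.
Proof. by rewrite sqrtC_eq0 pnatr_eq0 expn_eq0. Qed.

Lemma Uhad_kron k q a c j :
  (a < 2 ^ (k + q))%N -> (c < 2 ^ k)%N -> (j < 2 ^ q)%N ->
  Uhad (k + q) a.+1 (2 ^ q * c + j).+1 =
  sqrtC (2 ^ q)%N%:R / sqrtC (2 ^ (k + q))%N%:R * (sylv k (a %/ 2 ^ q) c)%:~R
  * Uhad q (a %% 2 ^ q).+1 j.+1.
Proof.
move=> ha hc hj; have q_gt0 : (0 < 2 ^ q)%N by rewrite expn_gt0.
have hcol : (2 ^ q * c + j < 2 ^ (k + q))%N.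
  by rewrite expnD; apply: (leq_trans (n := 2 ^ q * c.+1)); nia.
rewrite /Uhad /= sylv_kron // mulnC divnMDl // modnMDl.
rewrite (divn_small hj) (modn_small hj) addn0 intrM.
have := sqrt_pow2_neq0 q; have := sqrt_pow2_neq0 (k + q).
by move: (sqrtC _) (sqrtC _) => sp sq sp0 sq0; field; rewrite sp0 sq0.
Qed.

Lemma permanent_scale_permute_rows n (d : 'I_n -> algC) (s : 'S_n)
  (A : 'M[algC]_n) :
  permanent (\matrix_(i, j) (d i * A (s i) j)) = \prod_i d i * permanent A.
Proof.
rewrite /permanent mulr_sumr (reindex_inj (mulgI s)); apply: eq_bigr => sg _ /=.
under eq_bigr => i _ do rewrite mxE; rewrite big_split /=; congr (_ * _).
rewrite (reindex_inj (@perm_inj _ s^-1)); apply: eq_bigr => i _.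
by rewrite permKV permM permKV.
Qed.

Lemma det_scale_permute_rows (R : comRingType) n (d : 'I_n -> R) (s : 'S_n)
  (A : 'M[R]_n) :
  \det (\matrix_(i, j) (d i * A (s i) j)) = \prod_i d i * (-1) ^+ s * \det A.
Proof.
have -> : \matrix_(i, j) (d i * A (s i) j) = diag_mx (\row_i d i) *m row_perm s A.
  by apply/matrixP => i j; rewrite mul_diag_mx !mxE.
rewrite det_mulmx det_diag row_permE det_mulmx det_perm mulrA.
by congr (_ * _ * _); apply: eq_bigr => i _; rewrite mxE.
Qed.

Lemma perm_eq_nth_perm (T : eqType) (x0 : T) n (s1 s2 : seq T) :
  size s2 = n -> perm_eq s1 s2 ->
  exists s : 'S_n, forall i : 'I_n, nth x0 s1 i = nth x0 s2 (s i).
Proof.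
move=> /eqP hsz /(tuple_permP (t := Tuple hsz)) [s ->]; exists s => i.
by rewrite /= (nth_map i) ?size_enum_ord // nth_ord_enum (tnth_nth x0).
Qed.

Lemma scat_Uhad_reduce k q c t : (c < 2 ^ k)%N ->
  is_state (2 ^ (k + q)) (2 ^ q) t ->
  exists (s : 'S_(2 ^ q)) (d : 'I_(2 ^ q) -> algC), \prod_i d i != 0 /\
  scat (Uhad (k + q)) (2 ^ q) (iota (1 + 2 ^ q * c) (2 ^ q)) t =
  \matrix_(i, j) (d i * scat (Uhad q) (2 ^ q) (iota 1 (2 ^ q))
                             (reduce_state (2 ^ q) t) (s i) j).
Proof.
move=> hc /and3P[/eqP t_size _ /allP t_modes].
have [s hs] : exists s : 'S_(2 ^ q), forall i : 'I_(2 ^ q),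
    (((nth 0 t i).-1 %% 2 ^ q).+1 = nth 0 (reduce_state (2 ^ q) t) (s i))%N.
  have [||s hs] := perm_eq_nth_perm 0%N (n := 2 ^ q)
      (s1 := [seq ((x.-1 %% 2 ^ q).+1)%N | x <- t]) (s2 := reduce_state (2 ^ q) t).
  - by rewrite size_sort size_map.
  - by rewrite perm_sym perm_sort.
  by exists s => i; rewrite -hs (nth_map 0%N) ?t_size.
have row_mode (i : 'I_(2 ^ q)) :
    exists2 a, nth 0%N t i = a.+1 & (a < 2 ^ (k + q))%N.
  have i_lt : (i < size t)%N by rewrite t_size.
  by have /t_modes := mem_nth 0%N i_lt; case: (nth _ t i) => // a; exists a.
exists s, (fun i => sqrtC (2 ^ q)%N%:R / sqrtC (2 ^ (k + q))%N%:R
                    * (sylv k ((nth 0%N t i).-1 %/ 2 ^ q) c)%:~R); split.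
  rewrite prodf_seq_neq0; apply/allP => i _ /=.
  by rewrite !mulf_neq0 ?invr_eq0 ?sqrt_pow2_neq0 ?intr_eq0 ?sylv_neq0.
apply/matrixP => i j; have [a ti ha] := row_mode i.
by rewrite !mxE -hs !nth_iota // ti -addnA !add1n Uhad_kron.
Qed.

Lemma norm_fact_neq0 m s t : norm_fact m s t != 0.
Proof.
rewrite sqrtC_eq0 pnatr_eq0 -lt0n muln_gt0 !prodn_gt0 // => i; exact: fact_gt0.
Qed.

Lemma scaled_ratio_eq0 (F : fieldType) (a x u v : F) :
  a != 0 -> u != 0 -> v != 0 -> (a * x / u = 0 <-> x / v = 0).
Proof.
move=> a0 u0 v0; have key : (a * x / u == 0) = (x / v == 0).
  by rewrite !mulf_eq0 !invr_eq0 (negbTE a0) (negbTE u0) (negbTE v0) /= !orbF.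
by split=> /eqP; [rewrite key | rewrite -key] => /eqP.
Qed.

Theorem proposition4 (k q c : nat) (hc : (c <= 2 ^ k - 1)%N) (t : seq nat)
  (ht : is_state (2 ^ (k + q)) (2 ^ q) t) :
  let p := (k + q)%N in
  let m := (2 ^ p)%N in
  let n := (2 ^ q)%N in
  let s := iota (1 + n * c) n in
  (boson_suppressed (Uhad p) m n s t <->
   boson_suppressed (Uhad q) n n (iota 1 n) (reduce_state n t)) /\
  (fermion_suppressed (Uhad p) m n s t <->
   fermion_suppressed (Uhad q) n n (iota 1 n) (reduce_state n t)).
Proof.
have c_lt : (c < 2 ^ k)%N by move: hc; have := expn_gt0 2 k; lia.
move=> p m n s; rewrite {}/s {}/m {}/n {}/p.
rewrite /boson_suppressed /boson_amp /fermion_suppressed /fermion_amp.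
have [sg [d [d0 ->]]] := scat_Uhad_reduce c_lt ht.
rewrite permanent_scale_permute_rows det_scale_permute_rows.
have d_sign0 : \prod_i d i * (-1) ^+ sg != 0 by rewrite mulf_neq0 ?signr_eq0.
split; [exact: scaled_ratio_eq0 d0 (norm_fact_neq0 _ _ _) (norm_fact_neq0 _ _ _)
       |exact: scaled_ratio_eq0 d_sign0 (norm_fact_neq0 _ _ _) (norm_fact_neq0 _ _ _)].
Qed.
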